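(* For every $\delta\in(0,\frac12]$ there exists $\alpha=\alpha(\delta)\in(0,1]$ such that $$\lambda\cdot a_1^{1+\alpha}\cdot(2-a_1x)+a_2^{1+\alpha}\cdot(2-a_2x)\le(1+\lambda)\cdot(2-x)$$ for every $x\ge\delta$ and every $\lambda,y\ge0$ with $\lambda y\le1$, where $a_1=1+y$ and $a_2=1-\lambda y$. *)

From Stdlib Require Import Reals.
Open Scope R_scope.

(* Real power a^e for a >= 0 and e > 0, with the convention 0^e = 0
   (Rpower alone gives Rpower 0 e = exp (e * ln 0) = 1, which is wrong). *)
Definition rpow (a e : R) : R := if Req_EM_T a 0 then 0 else Rpower a e.

From Stdlib Require Import Reals Lra.
Open Scope R_scope.

(* With [k = 2(1+a) - (2+a)x], the map [t |-> t^(1+a) (2 - t x)] lies below its tangent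
   line [2 - x + k (t - 1)] at [t = 1] on all of [t >= 0]; evaluating this at
   [t = 1 + y] and [t = 1 - lambda y] and adding with weights [lambda] and [1], the
   first-order terms cancel.  The gap is affine in [x]: multiplied by [1 + a], it is
   [2t (1 - (1+a) t^a + a t^(1+a)) + ((1+a) x - 2a) (t^(2+a) - 1 - (2+a)(t-1))],
   and both brackets are nonnegative by Bernoulli's inequality for real exponents.
   The condition [2a <= (1+a) x] cannot be dropped: it is the bound at [t = 0]. *)

Lemma Rpower_1_l (e : R) : Rpower 1 e = 1.
Proof. unfold Rpower; rewrite ln_1, Rmult_0_r; apply exp_0. Qed.

Lemma min_of_deriv_sign (f f' : R -> R) (c t : R) :
  0 < c -> 0 < t ->
  (forall s, 0 < s -> derivable_pt_lim f s (f' s)) ->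
  (forall s, 0 < s -> 0 <= (s - c) * f' s) ->
  f c <= f t.
Proof.
  intros Hc Ht Hderiv Hsign.
  destruct (Rtotal_order c t) as [Hct | [<- | Htc]]; [| lra |].
  - destruct (MVT_cor2 f f' c t Hct) as [s [Hmvt Hs]].
    { intros s Hs; apply Hderiv; lra. }
    specialize (Hsign s ltac:(lra)); nra.
  - destruct (MVT_cor2 f f' t c Htc) as [s [Hmvt Hs]].
    { intros s Hs; apply Hderiv; lra. }
    specialize (Hsign s ltac:(lra)); nra.
Qed.

Lemma Rpower_Bernoulli (p t : R) : 1 <= p -> 0 < t -> 1 + p * (t - 1) <= Rpower t p.
Proof.
  intros Hp Ht.
  enough (Hmin : Rpower 1 p - p * 1 <= Rpower t p - p * t)
    by (rewrite Rpower_1_l in Hmin; lra).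
  apply (min_of_deriv_sign (fun s => Rpower s p - p * s)
           (fun s => p * Rpower s (p - 1) - p * 1)); [lra | exact Ht | |].
  - intros s Hs.
    apply derivable_pt_lim_minus.
    + now apply derivable_pt_lim_power.
    + apply derivable_pt_lim_scal, derivable_pt_lim_id.
  - intros s Hs.
    destruct (Rle_dec 1 s) as [H1s | Hs1].
    + pose proof (Rle_Rpower_l 1 s (p - 1) ltac:(lra) ltac:(lra)) as Hmono.
      rewrite Rpower_1_l in Hmono.
      apply Rmult_le_pos; nra.
    + pose proof (Rle_Rpower_l s 1 (p - 1) ltac:(lra) ltac:(lra)) as Hmono.
      rewrite Rpower_1_l in Hmono.
      assert (0 <= p * (1 - Rpower s (p - 1))) by nra.
      nra.
Qed.

Lemma Rpower_AM_GM (a t : R) : 0 < a -> 0 < t ->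
  (1 + a) * Rpower t a <= 1 + a * Rpower t (1 + a).
Proof.
  intros Ha Ht.
  assert (Hexp : Rpower (Rpower t a) ((1 + a) / a) = Rpower t (1 + a)).
  { rewrite Rpower_mult; f_equal; field; lra. }
  pose proof (Rpower_Bernoulli ((1 + a) / a) (Rpower t a)) as Hb.
  rewrite Hexp in Hb.
  assert (Hpow : 0 < Rpower t a) by apply exp_pos.
  assert (Hp : 1 <= (1 + a) / a)
    by (apply Rmult_le_reg_r with a; [lra | unfold Rdiv; field_simplify; lra]).
  specialize (Hb Hp Hpow).
  apply Rmult_le_compat_l with (r := a) in Hb; [| lra].
  replace (a * (1 + (1 + a) / a * (Rpower t a - 1))) with ((1 + a) * Rpower t a - 1)
    in Hb by (field; lra).
  lra.
Qed.

Lemma rpow_le_tangent_at_1 (a x t : R) : 0 < a -> 2 * a <= (1 + a) * x -> 0 <= t ->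
  rpow t (1 + a) * (2 - t * x) <= (2 - x) + (2 * (1 + a) - (2 + a) * x) * (t - 1).
Proof.
  intros Ha Hx Ht.
  unfold rpow; destruct (Req_EM_T t 0) as [-> | Ht0]; [lra |].
  assert (Htpos : 0 < t) by lra.
  pose proof (Rpower_AM_GM a t Ha Htpos) as Hamgm.
  pose proof (Rpower_Bernoulli (2 + a) t ltac:(lra) Htpos) as Hbern.
  assert (Hpow1 : Rpower t (1 + a) = t * Rpower t a)
    by (rewrite Rpower_plus, Rpower_1; lra).
  assert (Hpow2 : Rpower t (2 + a) = t * (t * Rpower t a)).
  { replace (2 + a) with (1 + (1 + a)) by ring.
    rewrite Rpower_plus, Rpower_1, Hpow1; lra. }
  rewrite Hpow1 in Hamgm |- *; rewrite Hpow2 in Hbern.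
  assert (Hamgm_gap : 0 <= t * (1 + a * (t * Rpower t a) - (1 + a) * Rpower t a)) by nra.
  assert (Hbern_gap : 0 <= ((1 + a) * x - 2 * a)
                           * (t * (t * Rpower t a) - 1 - (2 + a) * (t - 1))) by nra.
  nra.
Qed.

Theorem lemma2p21 :
  forall delta : R, 0 < delta <= 1/2 ->
  exists alpha : R, 0 < alpha <= 1 /\
    forall x lambda y : R,
      delta <= x -> 0 <= lambda -> 0 <= y -> lambda * y <= 1 ->
      lambda * rpow (1 + y) (1 + alpha) * (2 - (1 + y) * x)
        + rpow (1 - lambda * y) (1 + alpha) * (2 - (1 - lambda * y) * x)
      <= (1 + lambda) * (2 - x).
Proof.
  intros delta Hdelta. exists (delta / 2). split; [lra |].
  intros x lambda y Hx Hlambda Hy Hly.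
  assert (Hadm : 2 * (delta / 2) <= (1 + delta / 2) * x) by nra.
  pose proof (rpow_le_tangent_at_1 (delta / 2) x (1 + y) ltac:(lra) Hadm ltac:(lra))
    as Hright.
  pose proof (rpow_le_tangent_at_1 (delta / 2) x (1 - lambda * y) ltac:(lra) Hadm ltac:(lra))
    as Hleft.
  apply Rmult_le_compat_l with (r := lambda) in Hright; [| exact Hlambda].
  lra.
Qed.
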